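(* Let $p$ be a prime and $n\ge2$, and let $l_1,\ldots,l_{n-1}$ be integers such that $l_{\alpha+\beta}\le l_\alpha+l_\beta$ for all $\alpha,\beta\ge1$ with $\alpha+\beta\le n-1$. Then $$\{B\in T_n^+(\mathbf{Q}_p): b_{j,k}\in p^{l_{k-j}}\mathbf{Z}_p\text{ when }j<k\}$$ is a compact open subring of $T_n^+(\mathbf{Q}_p)$, and $$\{A\in T^+(n,\mathbf{Q}_p): a_{j,k}\in p^{l_{k-j}}\mathbf{Z}_p\text{ when }j<k\}$$ is a compact open subgroup of $T^+(n,\mathbf{Q}_p)$. In particular $\{A\in T^+(n,\mathbf{Q}_p): \max_{j<k}|a_{j,k}|_p^{1/(k-j)}\le p^{-l}\}=\delta_{p^l}(T^+(n,\mathbf{Z}_p))$ is a compact open subgroup for each $l\in\mathbf{Z}$, and $T^+(n,\mathbf{Q}_p)$ has large compact open subgroups.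
   Context: $T_n^+(\mathbf{Q}_p)$ is the ring of strictly upper-triangular $n\times n$ matrices over $\mathbf{Q}_p$; $T^+(n,\mathbf{Q}_p)$ is the group of upper-triangular matrices with diagonal entries $1$, with the topology induced from $M_n(\mathbf{Q}_p)\cong\mathbf{Q}_p^{n^2}$; $T^+(n,\mathbf{Z}_p)$ is its subgroup with entries in $\mathbf{Z}_p$; $\delta_r$ multiplies the $(j,k)$ entry with $j<k$ by $r^{k-j}$. A topological group has large compact open subgroups if every compact subset is contained in a compact open subgroup. *)

From HB Require Import structures.
From mathcomp Require Import all_boot all_order all_algebra.
From mathcomp Require Import classical_sets reals exp.
From Stdlib Require List.
Set Implicit Arguments. Unset Strict Implicit. Unset Printing Implicit Defensive.
Import Order.TTheory GRing.Theory Num.Theory.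
Local Open Scope ring_scope.
Local Open Scope classical_set_scope.

Definition padic_val (p : nat) (q : rat) : int :=
  (logn p `|numq q|%N)%:Z - (logn p `|denq q|%N)%:Z.

Definition padic_abs (R : realType) (p : nat) (q : rat) : R :=
  if q == 0 then 0 else (p%:R : R) ^ (- padic_val p q).

(* (K, abs) is a field of p-adic numbers: a field with a non-archimedean
   absolute value that restricts to |.|_p on Q, in which Q is dense, and
   which is complete.  This determines (K, abs) up to unique isometric
   isomorphism, i.e. K "is" Q_p. *)
Definition is_Qp (p : nat) (R : realType) (K : fieldType) (abs : K -> R) : Prop :=
  (forall x, 0 <= abs x) /\
  (forall x, abs x = 0 <-> x = 0) /\
  (forall x y, abs (x * y) = abs x * abs y) /\
  (forall x y, abs (x + y) <= Num.max (abs x) (abs y)) /\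
  (forall q : rat, abs (ratr q) = padic_abs R p q) /\
  (forall (x : K) (e : R), 0 < e -> exists q : rat, abs (x - ratr q) < e) /\
  (forall u : nat -> K,
         (forall e : R, 0 < e -> exists N, forall m k, (N <= m)%N -> (N <= k)%N ->
              abs (u m - u k) < e) ->
         exists x, forall e : R, 0 < e -> exists N, forall m, (N <= m)%N ->
              abs (u m - x) < e).

Definition Zp (R : realType) (K : fieldType) (abs : K -> R) : set K :=
  [set x | abs x <= 1].
Definition pZp (R : realType) (K : fieldType) (abs : K -> R) (p : nat) (l : int) : set K :=
  [set x | exists z, Zp abs z /\ x = (p%:R : K) ^ l * z].

Definition Tn_plus (K : fieldType) (n : nat) : set 'M[K]_n :=
  [set B | forall j k : 'I_n, (k <= j)%N -> B j k = 0].
Definition T_plus (K : fieldType) (n : nat) : set 'M[K]_n :=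
  [set A | (forall j : 'I_n, A j j = 1) /\ (forall j k : 'I_n, (k < j)%N -> A j k = 0)].
Arguments Tn_plus : clear implicits.
Arguments T_plus : clear implicits.
Definition T_plus_Zp (R : realType) (K : fieldType) (abs : K -> R) (n : nat) : set 'M[K]_n :=
  [set A | T_plus K n A /\ forall j k : 'I_n, Zp abs (A j k)].

Definition delta (K : fieldType) (n : nat) (r : K) (A : 'M[K]_n) : 'M[K]_n :=
  \matrix_(j, k) (if (j < k)%N then r ^+ (k - j) * A j k else A j k).

Definition mx_close (R : realType) (K : fieldType) (abs : K -> R) (n : nat)
  (e : R) (A B : 'M[K]_n) : Prop := forall j k, abs (B j k - A j k) < e.

Definition rel_open (R : realType) (K : fieldType) (abs : K -> R) (n : nat)
  (X S : set 'M[K]_n) : Prop :=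
  S `<=` X /\
  forall A, S A -> exists e : R, 0 < e /\
    forall B, X B -> mx_close abs e A B -> S B.

Definition rel_compact (R : realType) (K : fieldType) (abs : K -> R) (n : nat)
  (X C : set 'M[K]_n) : Prop :=
  C `<=` X /\
  forall (I : Type) (U : I -> set 'M[K]_n),
    (forall i, rel_open abs X (U i)) ->
    C `<=` (fun A => exists i, U i A) ->
    exists s : seq I, C `<=` (fun A => exists2 i, Stdlib.Lists.List.In i s & U i A).

Definition is_subring_of (K : fieldType) (n : nat) (X S : set 'M[K]_n) : Prop :=
  [/\ S `<=` X, S 0, (forall A B, S A -> S B -> S (A - B)) & (forall A B, S A -> S B -> S (A *m B))].
Definition is_subgroup_of (K : fieldType) (n : nat) (X S : set 'M[K]_n) : Prop :=
  [/\ S `<=` X, S 1%:M, (forall A B, S A -> S B -> S (A *m B)) & (forall A, S A -> S (invmx A))].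

Definition compact_open_subring (R : realType) (K : fieldType) (abs : K -> R) (n : nat)
  (S : set 'M[K]_n) : Prop :=
  is_subring_of (Tn_plus K n) S /\ rel_compact abs (Tn_plus K n) S /\ rel_open abs (Tn_plus K n) S.
Definition compact_open_subgroup (R : realType) (K : fieldType) (abs : K -> R) (n : nat)
  (S : set 'M[K]_n) : Prop :=
  is_subgroup_of (T_plus K n) S /\ rel_compact abs (T_plus K n) S /\ rel_open abs (T_plus K n) S.

Definition has_large_compact_open_subgroups (R : realType) (K : fieldType) (abs : K -> R)
  (n : nat) : Prop :=
  forall C, rel_compact abs (T_plus K n) C ->
    exists S, compact_open_subgroup abs S /\ C `<=` S.

Definition ring_l (R : realType) (K : fieldType) (abs : K -> R) (p n : nat) (l : nat -> int)
  : set 'M[K]_n :=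
  [set B | Tn_plus K n B /\ forall j k : 'I_n, (j < k)%N -> pZp abs p (l (k - j)%N) (B j k)].
Definition group_l (R : realType) (K : fieldType) (abs : K -> R) (p n : nat) (l : nat -> int)
  : set 'M[K]_n :=
  [set A | T_plus K n A /\ forall j k : 'I_n, (j < k)%N -> pZp abs p (l (k - j)%N) (A j k)].

Definition max_root_norm (R : realType) (K : fieldType) (abs : K -> R) (n : nat)
  (A : 'M[K]_n) : R :=
  \big[Num.max/0]_(j < n) \big[Num.max/0]_(k < n | (j < k)%N)
     powR (abs (A j k)) ((k - j)%N%:R)^-1.
Arguments ring_l {R K} abs p n l.
Arguments group_l {R K} abs p n l.
Arguments T_plus_Zp {R K} abs n.
Arguments has_large_compact_open_subgroups {R K} abs n.

From Pilot Require Import Defs.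
From HB Require Import structures.
From mathcomp Require Import all_boot all_order all_algebra.
From mathcomp Require Import classical_sets reals exp.
From mathcomp Require Import zify ring.
From Stdlib Require List.
Import Order.TTheory GRing.Theory Num.Theory.
Local Open Scope ring_scope.
Local Open Scope classical_set_scope.
Set Implicit Arguments. Unset Strict Implicit. Unset Printing Implicit Defensive.

(* Both sets are of the form {B | |b_jk| <= w (k - j) for j < k} for a weight
   with w a * w b <= w (a + b) (here w d = |p|^(l d)).  Since (BC)_jk sums
   products b_ji c_ik with (i - j) + (k - i) = k - j, the ultrametric
   inequality makes such a set of strictly upper triangular matrices a ring;
   for unipotent matrices 1 + N with N nilpotent, (1 + N)^-1 = sum_(i<n) (-N)^i
   reduces the group case to the ring case.  The set is open because its
   bounds are bounded below, and compact because it is bounded and closed: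
   Z_p is covered by the p^u balls m + p^u Z_p (0 <= m < p^u), and Q_p is
   complete.  The sets delta_(p^m) (T^+(n, Z_p)) are the weights w d = p^(-m d),
   and a compact set, covered by the increasing open subgroups with weights
   w d = p^(s d), lies in one of them. *)

Lemma seq_InP (T : eqType) (x : T) (s : seq T) : reflect (List.In x s) (x \in s).
Proof.
elim: s => [|y s ih]; first by right.
rewrite in_cons eq_sym; apply: (iffP orP) => [[/eqP->|/ih]|[->|/ih]]; by [left|right].
Qed.

Lemma nat_dependent_choice (T : Type) (P : nat -> T -> Prop) (Q : nat -> T -> T -> Prop) x0 :
  P 0%N x0 -> (forall k x, P k x -> exists y, Q k x y /\ P k.+1 y) ->
  exists f : nat -> T, forall k, P k (f k) /\ Q k (f k) (f k.+1).
Proof.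
move=> P0 PQ.
have step (kx : nat * T) : exists y, P kx.1 kx.2 -> Q kx.1 kx.2 y /\ P kx.1.+1 y.
  case: (boolp.EM (P kx.1 kx.2)) => [/PQ[y Qy]|nP]; first by exists y.
  by exists kx.2.
have [g Pg] := boolp.choice step.
pose st k := iter k (fun kx => (kx.1.+1, g kx)) (0%N, x0).
have st1 k : (st k).1 = k by elim: k => //= k ->.
have Pst k : P k (st k).2.
  by elim: k => // k ih; have := Pg (st k); rewrite st1 => /(_ ih)[].
exists (fun k => (st k).2) => k; split=> //.
by have := Pg (st k); rewrite st1 => /(_ (Pst k))[].
Qed.

Lemma ltn_ord_neq n (j k : 'I_n) : (j < k)%N -> j != k.
Proof. by move=> jk; rewrite -val_eqE /= ltn_eqF. Qed.

Lemma natr_prime_gt1 {R : numDomainType} (p : nat) : prime p -> 1 < p%:R :> R.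
Proof. by move=> /prime_gt1; rewrite ltr1n. Qed.

Lemma natr_prime_gt0 {R : numDomainType} (p : nat) : prime p -> 0 < p%:R :> R.
Proof. by move=> /prime_gt0; rewrite ltr0n. Qed.

Lemma powR_invn_le (R : realType) (a b : R) (d : nat) : 0 <= a -> 0 <= b -> (0 < d)%N ->
  (powR a (d%:R)^-1 <= b) = (a <= b ^+ d).
Proof.
move=> a0 b0 d0; have d_neq0 : (d%:R : R) != 0 by rewrite pnatr_eq0 -lt0n.
rewrite -(ler_pXn2r d0) ?nnegrE ?powR_ge0 //; congr (_ <= _).
by rewrite -powR_mulrn ?powR_ge0 // -powRrM mulVf ?powRr1.
Qed.

Lemma coprimez_mod_solution (a b P : int) : 0 < P -> coprimez b P ->
  exists m, [/\ 0 <= m, m < P & (P %| a - m * b)%Z].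
Proof.
move=> P0 /coprimezP[[u v] /= uv1]; have P_neq0 : P != 0 by rewrite gt_eqF.
exists ((a * u) %% P)%Z; split; [exact: modz_ge0|exact: ltz_pmod|].
have -> : a - ((a * u) %% P)%Z * b = (a * v + ((a * u) %/ P)%Z * b) * P.
  have := divz_eq (a * u) P; set d := ((a * u) %/ P)%Z; set m := ((a * u) %% P)%Z.
  move=> au; have -> : m = a * u - d * P by rewrite au addrAC subrr add0r.
  apply/eqP; rewrite -subr_eq0; apply/eqP.
  transitivity (a * (1 - (u * b + v * P))); first by ring.
  by rewrite uv1 subrr mulr0.
exact: dvdz_mull.
Qed.

Definition nonarchimedean_abs (R : realType) (K : fieldType) (abs : K -> R) : Prop :=
  [/\ forall x, 0 <= abs x, forall x, abs x = 0 <-> x = 0,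
      forall x y, abs (x * y) = abs x * abs y
    & forall x y, abs (x + y) <= Num.max (abs x) (abs y)].

Lemma is_Qp_nonarchimedean (p : nat) (R : realType) (K : fieldType) (abs : K -> R) :
  is_Qp p abs -> nonarchimedean_abs abs.
Proof. by case=> ge0 [eq0 [absM [le_max _]]]. Qed.

Definition mx_ball (R : realType) (K : fieldType) (abs : K -> R) (n : nat)
    (A : 'M[K]_n) (r : R) : set 'M[K]_n :=
  [set B | forall j k, abs (B j k - A j k) <= r].

Definition mx_closed (R : realType) (K : fieldType) (abs : K -> R) (n : nat)
    (C : set 'M[K]_n) : Prop :=
  forall A, (forall e, 0 < e -> exists2 B, C B & mx_close abs e B A) -> C A.

Section NonArchimedean.
Variables (R : realType) (K : fieldType) (abs : K -> R).
Hypothesis Habs : nonarchimedean_abs abs.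

Lemma abs_ge0 x : 0 <= abs x. Proof. by case: Habs. Qed.
Lemma abs_eq0 x : abs x = 0 <-> x = 0. Proof. by case: Habs. Qed.
Lemma absM x y : abs (x * y) = abs x * abs y. Proof. by case: Habs. Qed.
Lemma absD_le_max x y : abs (x + y) <= Num.max (abs x) (abs y). Proof. by case: Habs. Qed.

Lemma abs0 : abs 0 = 0. Proof. exact/abs_eq0. Qed.

Lemma abs_le0 x : abs x <= 0 -> x = 0.
Proof. by move=> h; apply/abs_eq0/eqP; rewrite eq_le h abs_ge0. Qed.

Lemma abs_neq0 x : x != 0 -> abs x != 0.
Proof. by move=> x0; apply: contra x0 => /eqP/abs_eq0 ->. Qed.

Lemma abs1 : abs 1 = 1.
Proof.
apply: (mulfI (abs_neq0 (oner_neq0 K))).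
by rewrite -absM !mulr1.
Qed.

Lemma absN x : abs (- x) = abs x.
Proof.
have absN1 : abs (-1) = 1.
  have h : abs (-1) * abs (-1) = 1 by rewrite -absM mulrNN mulr1 abs1.
  by apply/eqP; rewrite -(@eqrXn2 _ 2) ?expr2 ?h ?mulr1 // ?abs_ge0.
by rewrite -mulN1r absM absN1 mul1r.
Qed.

Lemma absBC x y : abs (x - y) = abs (y - x).
Proof. by rewrite -absN opprB. Qed.

Lemma absD_le x y r : abs x <= r -> abs y <= r -> abs (x + y) <= r.
Proof. by move=> hx hy; apply: le_trans (absD_le_max x y) _; rewrite ge_max hx hy. Qed.

Lemma absD_lt x y r : abs x < r -> abs y < r -> abs (x + y) < r.
Proof. by move=> hx hy; apply: le_lt_trans (absD_le_max x y) _; rewrite gt_max hx hy. Qed.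

Lemma absB_le x y r : abs x <= r -> abs y <= r -> abs (x - y) <= r.
Proof. by move=> hx hy; apply: absD_le; rewrite ?absN. Qed.

Lemma abs_sum_le (I : Type) (s : seq I) (P : pred I) (F : I -> K) r :
  0 <= r -> (forall i, P i -> abs (F i) <= r) -> abs (\sum_(i <- s | P i) F i) <= r.
Proof.
move=> r0 hF; apply: (big_ind (fun x => abs x <= r)) => //; first by rewrite abs0.
by move=> x y; apply: absD_le.
Qed.

Lemma absX x k : abs (x ^+ k) = abs x ^+ k.
Proof. by elim: k => [|k ih]; rewrite ?abs1 // !exprS absM ih. Qed.

Lemma absV x : abs x^-1 = (abs x)^-1.
Proof.
have [->|x0] := eqVneq x 0; first by rewrite invr0 abs0 invr0.
apply: (mulfI (abs_neq0 x0)).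
by rewrite -absM !mulfV ?abs1 ?abs_neq0.
Qed.

Lemma absXz x (z : int) : abs (x ^ z) = abs x ^ z.
Proof. by case: z => k; rewrite ?absV absX. Qed.

Lemma abs_int_le1 (z : int) : abs z%:~R <= 1.
Proof.
suff abs_nat m : abs m%:R <= 1.
  by case: z => m; rewrite ?NegzE ?mulrNz ?absN abs_nat.
elim: m => [|m ih]; first by rewrite abs0.
by rewrite -addn1 natrD absD_le // abs1.
Qed.

Lemma abs_le_of_approx x a r : 0 <= r ->
  (forall e, 0 < e -> exists2 y, abs (x - y) < e & abs (y - a) <= r) -> abs (x - a) <= r.
Proof.
move=> r0 h; rewrite leNgt; apply/negP => hr.
have [y xy ya] := h _ (le_lt_trans r0 hr).
have : abs ((x - y) + (y - a)) < abs (x - a) by apply: absD_lt => //; apply: le_lt_trans hr.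
by rewrite addrA subrK ltxx.
Qed.

Section Matrices.
Variable n : nat.
Implicit Types (A B C : 'M[K]_n) (X : set 'M[K]_n).

Lemma mx_ball_center A r : 0 <= r -> mx_ball abs A r A.
Proof. by move=> r0 j k; rewrite subrr abs0. Qed.

Lemma mx_ball_trans A B C r s : s <= r ->
  mx_ball abs A r B -> mx_ball abs B s C -> mx_ball abs A r C.
Proof.
move=> sr AB BC j k; rewrite -(subrK (B j k) (C j k)) -addrA.
exact: absD_le (le_trans (BC j k) sr) (AB j k).
Qed.

Lemma mx_ball_sym A B C r : mx_ball abs A r B -> mx_ball abs A r C -> mx_ball abs B r C.
Proof.
move=> AB AC j k.
have -> : C j k - B j k = (C j k - A j k) - (B j k - A j k) by rewrite opprB addrA subrK.
exact: absB_le (AC j k) (AB j k).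
Qed.

Lemma mx_ball_close A B r e : r < e -> mx_ball abs A r B -> mx_close abs e A B.
Proof. by move=> re AB j k; apply: le_lt_trans re. Qed.

Lemma mx_closed_entry X A (j k : 'I_n) a r : 0 <= r ->
  (forall e, 0 < e -> exists2 B, X B & mx_close abs e B A) ->
  (forall B, X B -> abs (B j k - a) <= r) -> abs (A j k - a) <= r.
Proof.
move=> r0 hA hX; apply: abs_le_of_approx => // e e0.
by have [B XB BA] := hA e e0; exists (B j k); [apply: BA|apply: hX].
Qed.

End Matrices.
End NonArchimedean.

Section Unipotent.
Variables (K : fieldType) (n : nat).

Definition mxpow (M : 'M[K]_n) i := iter i (mulmx M) 1%:M.

Lemma mxpow_strict_upper_eq0 M i (j k : 'I_n) :
  Tn_plus K n M -> (k < j + i)%N -> mxpow M i j k = 0.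
Proof.
move=> M0; elim: i j k => [|i ih] j k.
  by rewrite addn0 mxE => kj; rewrite eq_sym (negPf (ltn_ord_neq kj)).
move=> kji; rewrite /mxpow /= mxE big1 // => m _.
case: (leqP m j) => mj; first by rewrite M0 // mul0r.
by rewrite ih ?mulr0 // (leq_trans kji) // -addSnnS leq_add2r.
Qed.

Lemma invmx_unipotent M : Tn_plus K n M ->
  invmx (1%:M - M) = \sum_(0 <= i < n) mxpow M i.
Proof.
move=> M0.
have Mn0 : mxpow M n = 0.
  by apply/matrixP => j k; rewrite mxE mxpow_strict_upper_eq0 // ltn_addl.
have inv_r : (1%:M - M) *m \sum_(0 <= i < n) mxpow M i = 1%:M.
  rewrite mulmxBl mul1mx mulmx_sumr -sumrB.
  under eq_bigr do rewrite -opprB.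
  by rewrite sumrN (telescope_sumr (fun i => mxpow M i)) // Mn0 sub0r opprK.
have [unit_1M _] := mulmx1_unit inv_r.
by rewrite -(mulKmx unit_1M (\sum_(0 <= i < n) mxpow M i)) inv_r mulmx1.
Qed.

End Unipotent.

Section WeightedMatrices.
Variables (R : realType) (K : fieldType) (abs : K -> R).
Hypothesis Habs : nonarchimedean_abs abs.
Variables (n : nat) (w : nat -> R).
Hypothesis w_gt0 : forall d, 0 < w d.
Hypothesis wM : forall a b, (1 <= a)%N -> (1 <= b)%N -> (a + b <= n - 1)%N ->
  w a * w b <= w (a + b)%N.

Definition wring : set 'M[K]_n :=
  [set B | Tn_plus K n B /\ forall j k : 'I_n, (j < k)%N -> abs (B j k) <= w (k - j)%N].
Definition wgroup : set 'M[K]_n :=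
  [set A | T_plus K n A /\ forall j k : 'I_n, (j < k)%N -> abs (A j k) <= w (k - j)%N].

Lemma wring0 : wring 0.
Proof. by split=> j k _; rewrite mxE // (abs0 Habs) ltW. Qed.

Lemma wringB A B : wring A -> wring B -> wring (A - B).
Proof.
move=> [A0 Aw] [B0 Bw]; split=> j k jk; rewrite !mxE; first by rewrite A0 // B0 // subr0.
exact: absB_le Habs _ _ _ (Aw _ _ jk) (Bw _ _ jk).
Qed.

Lemma wringN A : wring A -> wring (- A).
Proof. by move=> wA; rewrite -sub0r; apply: wringB wring0 wA. Qed.

Lemma wringD A B : wring A -> wring B -> wring (A + B).
Proof. by move=> wA wB; rewrite -[B]opprK; apply/wringB/wringN. Qed.

(* [(AB)_{jk} = sum_{j<i<k} a_{ji} b_{ik}] and [(i - j) + (k - i) = k - j]. *)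
Lemma wringM A B : wring A -> wring B -> wring (A *m B).
Proof.
move=> [A0 Aw] [B0 Bw]; split=> j k jk; rewrite !mxE.
  rewrite big1 // => i _; case: (leqP i j) => ij; first by rewrite A0 ?mul0r.
  by rewrite B0 ?mulr0 // (leq_trans jk) // ltnW.
apply: (abs_sum_le Habs) => [|i _]; first exact/ltW.
case: (leqP i j) => ij; first by rewrite A0 // mul0r (abs0 Habs) ltW.
case: (leqP k i) => ik; first by rewrite B0 // mulr0 (abs0 Habs) ltW.
rewrite (absM Habs); apply: le_trans (_ : w (i - j)%N * w (k - i)%N <= _).
  by apply: ler_pM; rewrite ?(abs_ge0 Habs) ?Aw ?Bw.
have -> : (k - j = (i - j) + (k - i))%N by lia.
have kn := ltn_ord k; apply: wM; lia.
Qed.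

Lemma wgroupE A : wgroup A <-> wring (A - 1%:M).
Proof.
split=> [[[A1 A0] Aw]|[A0 Aw]].
  split=> j k jk; rewrite !mxE; last by rewrite (negPf (ltn_ord_neq jk)) subr0 Aw.
  case: (ltngtP k j) jk => // [kj _|/val_inj -> _]; last by rewrite A1 eqxx subrr.
  by rewrite A0 // eq_sym (negPf (ltn_ord_neq kj)) subr0.
split; first split.
- by move=> j; apply/eqP; rewrite -subr_eq0; have := A0 j j (leqnn _); rewrite !mxE eqxx => ->.
- move=> j k kj; have := A0 j k (ltnW kj).
  by rewrite !mxE eq_sym (negPf (ltn_ord_neq kj)) subr0.
- by move=> j k jk; have := Aw j k jk; rewrite !mxE (negPf (ltn_ord_neq jk)) subr0.
Qed.

Lemma wgroup1 : wgroup 1%:M.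
Proof. by apply/wgroupE; rewrite subrr; apply: wring0. Qed.

Lemma wgroupM A B : wgroup A -> wgroup B -> wgroup (A *m B).
Proof.
move=> /wgroupE wA /wgroupE wB; apply/wgroupE.
have -> : A *m B - 1%:M = (A - 1%:M) + (B - 1%:M) + (A - 1%:M) *m (B - 1%:M).
  by rewrite mulmxBl !mulmxBr !mulmx1 mul1mx; apply/matrixP => i j; rewrite !mxE; ring.
by apply: wringD; [apply: wringD|apply: wringM].
Qed.

Lemma wring_mxpow M i : wring M -> (0 < i)%N -> wring (mxpow M i).
Proof.
move=> wM0; elim: i => [|[|i] ih] // _; first by rewrite /mxpow /= mulmx1.
exact: wringM wM0 (ih isT).
Qed.

Lemma wgroupV A : (0 < n)%N -> wgroup A -> wgroup (invmx A).
Proof.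
move=> n0 /wgroupE wA; set M := - (A - 1%:M).
have wM0 : wring M by apply: wringN.
have -> : A = 1%:M - M by rewrite opprK addrC subrK.
rewrite invmx_unipotent; last by case: wM0.
apply/wgroupE; rewrite big_ltn // addrAC subrr add0r.
rewrite big_nat_cond; apply: (big_ind wring) => [||i /andP[/andP[i0 _] _]].
- exact: wring0.
- exact: wringD.
- exact: wring_mxpow.
Qed.

Lemma weight_lb N : exists2 e, 0 < e & forall d, (d < N)%N -> e <= w d.
Proof.
elim: N => [|N [e e0 le_ew]]; first by exists 1.
exists (Num.min e (w N)) => [|d]; first by rewrite lt_min e0 w_gt0.
rewrite ltnS leq_eqVlt => /orP[/eqP->|dN]; by rewrite ge_min ?lexx ?orbT ?le_ew.
Qed.

Lemma weight_ub N : exists M, forall d, (d < N)%N -> w d <= M.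
Proof.
elim: N => [|N [M le_wM]]; first by exists 0.
exists (Num.max M (w N)) => d.
rewrite ltnS leq_eqVlt => /orP[/eqP->|dN]; by rewrite le_max ?lexx ?orbT ?le_wM.
Qed.

Lemma weight_open (X : set 'M[K]_n) (P : set 'M[K]_n) : P `<=` X ->
  (forall A, P A <-> X A /\ forall j k : 'I_n, (j < k)%N -> abs (A j k) <= w (k - j)%N) ->
  rel_open abs X P.
Proof.
move=> PX PE; split=> // A /PE[_ Aw]; have [e e0 le_ew] := weight_lb n.
exists e; split=> // B XB AB; apply/PE; split=> // j k jk.
rewrite -(subrK (A j k) (B j k)); apply: (absD_le Habs) (Aw _ _ jk).
apply/ltW/(lt_le_trans (AB j k))/le_ew.
by apply: leq_ltn_trans (ltn_ord k); apply: leq_subr.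
Qed.

Lemma wring_open : rel_open abs (Tn_plus K n) wring.
Proof. by apply: weight_open => [A []|]. Qed.

Lemma wgroup_open : rel_open abs (T_plus K n) wgroup.
Proof. by apply: weight_open => [A []|]. Qed.

Lemma weight_bounded (P : set 'M[K]_n) :
  (forall A, P A -> forall j k : 'I_n, (k <= j)%N -> abs (A j k) <= 1) ->
  (forall A, P A -> forall j k : 'I_n, (j < k)%N -> abs (A j k) <= w (k - j)%N) ->
  exists M, forall A, P A -> forall j k, abs (A j k) <= M.
Proof.
move=> Pdiag Pw; have [M le_wM] := weight_ub n.
exists (Num.max M 1) => A PA j k; case: (ltnP j k) => jk.
  rewrite le_max (le_trans (Pw _ PA _ _ jk)) ?le_wM //.
  by apply: leq_ltn_trans (ltn_ord k); apply: leq_subr.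
by rewrite le_max Pdiag ?orbT.
Qed.

Lemma wring_bounded : exists M, forall A, wring A -> forall j k, abs (A j k) <= M.
Proof.
apply: weight_bounded => [A [A0 _] j k kj|A []//].
by rewrite A0 // (abs0 Habs) ler01.
Qed.

Lemma wgroup_bounded : exists M, forall A, wgroup A -> forall j k, abs (A j k) <= M.
Proof.
apply: weight_bounded => [A [[A1 A0] _] j k|A []//].
case: (ltngtP k j) => // [kj|/val_inj ->] _; first by rewrite A0 // (abs0 Habs) ler01.
by rewrite A1 (abs1 Habs).
Qed.

Lemma wring_closed : mx_closed abs wring.
Proof.
move=> A clA; split=> j k jk.
  apply: (abs_le0 Habs); rewrite -[A j k]subr0; apply: (mx_closed_entry Habs) clA _ => //.
  by move=> B [B0 _]; rewrite B0 // subr0 (abs0 Habs).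
rewrite -[A j k]subr0; apply: (mx_closed_entry Habs) clA _; first exact/ltW.
by move=> B [_ Bw]; rewrite subr0 Bw.
Qed.

Lemma wgroup_closed : mx_closed abs wgroup.
Proof.
move=> A clA; split; first split.
- move=> j; apply/eqP; rewrite -subr_eq0; apply/eqP/(abs_le0 Habs).
  apply: (mx_closed_entry Habs) clA _ => //.
  by move=> B [[B1 _] _]; rewrite B1 subrr (abs0 Habs).
- move=> j k kj; apply: (abs_le0 Habs); rewrite -[A j k]subr0.
  apply: (mx_closed_entry Habs) clA _ => //.
  by move=> B [[_ B0] _]; rewrite B0 // subr0 (abs0 Habs).
- move=> j k jk; rewrite -[A j k]subr0; apply: (mx_closed_entry Habs) clA _; first exact/ltW.
  by move=> B [_ Bw]; rewrite subr0 Bw.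
Qed.

End WeightedMatrices.

Arguments wring {R K} abs n w.
Arguments wgroup {R K} abs n w.

Section Padic.
Variables (R : realType) (K : fieldType) (abs : K -> R) (p : nat).
Hypothesis Hp : prime p.
Hypothesis HK : is_Qp p abs.
Let Habs := is_Qp_nonarchimedean HK.
Local Notation c := (abs (p%:R : K)).

Lemma abs_ratr q : abs (ratr q) = padic_abs R p q.
Proof. by case: HK => _ [_ [_ [_ []]]]. Qed.

Lemma abs_p : c = (p%:R)^-1.
Proof.
rewrite -[p%:R](ratr_nat K) abs_ratr /padic_abs pnatr_eq0 gtn_eqF ?prime_gt0 //= /padic_val.
have -> : (p%:R : rat) = (p%:Z)%:Q by [].
by rewrite numq_int denq_int /= logn1 logn_prime // eqxx subr0 exprN1.
Qed.

Lemma abs_p_gt0 : 0 < c.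
Proof. by rewrite abs_p invr_gt0 (natr_prime_gt0 Hp). Qed.

Lemma abs_p_lt1 : c < 1.
Proof. by rewrite abs_p invf_lt1 ?(natr_prime_gt0 Hp) ?(natr_prime_gt1 Hp). Qed.

Lemma pK_neq0 : (p%:R : K) != 0.
Proof. by apply/eqP => p0; move: abs_p_gt0; rewrite p0 (abs0 Habs) ltxx. Qed.

Lemma exists_natrX_ge (M : R) : exists s : nat, M <= (p%:R : R) ^+ s.
Proof.
have M0 : 0 <= Num.max M 0 by rewrite le_max lexx orbT.
exists (Num.Def.archi_bound (Num.max M 0)).
apply: le_trans (ltW (lt_le_trans (archi_boundP M0) _)); first by rewrite le_max lexx.
by rewrite -natrX ler_nat ltnW // ltn_expl // prime_gt1.
Qed.

Lemma abs_pX_lt e : 0 < e -> exists t : nat, c ^+ t < e.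
Proof.
move=> e0; have [t et] := exists_natrX_ge (e^-1 + 1); exists t.
rewrite abs_p exprVn -(invrK e) ltf_pV2 ?posrE ?exprn_gt0 ?(natr_prime_gt0 Hp) ?invr_gt0 //.
by apply: lt_le_trans et; rewrite ltrDl.
Qed.

Lemma abs_pX_le (k m : nat) : (k <= m)%N -> c ^+ m <= c ^+ k.
Proof. by move=> km; rewrite ler_wiXn2l // ltW ?abs_p_gt0 ?abs_p_lt1. Qed.

Lemma abs_pX_ge0 (k : nat) : 0 <= c ^+ k.
Proof. by rewrite exprn_ge0 // ltW // abs_p_gt0. Qed.

Lemma abs_int_coprime (z : int) : ~~ (p %| `|z|)%N -> abs z%:~R = 1.
Proof.
move=> pz; rewrite -ratr_int abs_ratr /padic_abs /padic_val numq_int denq_int.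
have -> : (z%:Q == 0) = false by rewrite intr_eq0; apply: contraNF pz => /eqP ->.
by rewrite logn1 /= lognE (negPf pz) !andbF subrr oppr0 expr0z.
Qed.

Lemma abs_ratr_le1_den q : abs (ratr q) <= 1 -> ~~ (p %| `|denq q|)%N.
Proof.
rewrite abs_ratr /padic_abs /padic_val => q_le1; apply/negP => p_den.
have p_neq1 : p != 1%N by rewrite neq_ltn prime_gt1 ?orbT.
have q0 : q != 0 by apply: contraTneq p_den => ->; rewrite dvdn1.
have num0 : logn p `|numq q| = 0%N.
  rewrite lognE; case: ifP => // /and3P[_ _ p_num].
  have := coprime_num_den q; rewrite /coprime => /eqP g1.
  by move: (p_num); rewrite -(andbT (_ %| _)%N) -p_den -dvdn_gcd g1 dvdn1 (negPf p_neq1).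
have den_gt0 : (0 < logn p `|denq q|)%N.
  by rewrite logn_gt0 mem_primes Hp p_den absz_gt0 gt_eqF // denq_gt0.
move: q_le1; rewrite (negPf q0) num0 sub0r opprK -(prednK den_gt0) -exprnP exprS.
apply/negP; rewrite -ltNge (lt_le_trans (natr_prime_gt1 Hp)) //.
have p_gt1 : 1 < (p%:R : R) := natr_prime_gt1 Hp.
by rewrite ler_peMr ?exprn_ege1 // ltW // (lt_trans ltr01).
Qed.

(* [x] is within [c^u] of a rational [a / b] with [|b| = 1]; solving
   [m b = a] modulo [p^u] gives the integer [m]. *)
Lemma Zp_approx (u : nat) x : abs x <= 1 ->
  exists m : nat, (m < p ^ u)%N /\ abs (x - m%:R) <= c ^+ u.
Proof.
move=> x_le1; have cu0 : 0 < c ^+ u by rewrite exprn_gt0 // abs_p_gt0.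
have [q xq] : exists q, abs (x - ratr q) < c ^+ u.
  by case: HK => _ [_ [_ [_ [_ [dense _]]]]]; apply: dense.
have q_le1 : abs (ratr q) <= 1.
  rewrite -[ratr q](subKr x); apply: (absB_le Habs) => //.
  by apply/ltW/(lt_le_trans xq); rewrite exprn_ile1 // ltW ?abs_p_gt0 ?abs_p_lt1.
have b1 : abs (denq q)%:~R = 1 by apply/abs_int_coprime/abs_ratr_le1_den.
have bP : coprimez (denq q) (p ^ u)%N.
  by rewrite coprimezE /= coprime_sym coprimeXl // prime_coprime // abs_ratr_le1_den.
have P0 : 0 < (p ^ u)%N%:Z by rewrite ltz_nat expn_gt0 prime_gt0.
have [m [m0 mP /dvdzP[k Pk]]] := coprimez_mod_solution (numq q) P0 bP.
exists `|m|%N; split; first by rewrite -ltz_nat gez0_abs.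
have b0 : ((denq q)%:~R : K) != 0.
  by apply: contra_eq_neq b1 => ->; rewrite (abs0 Habs) eq_sym oner_neq0.
have -> : x - (`|m|%N)%:R = (x - ratr q) + (k * (p ^ u)%N%:Z)%:~R / (denq q)%:~R.
  by rewrite -Pk -[_%:R]/((`|m|%N)%:Z%:~R) gez0_abs // /ratr intrB intrM; field.
apply: (absD_le Habs); first exact: ltW.
rewrite !(absM Habs) (absV Habs) b1 invr1 mulr1 intrM (absM Habs).
rewrite -[((p ^ u)%N%:Z)%:~R]/((p ^ u)%N%:R) natrX (absX Habs).
by rewrite ler_piMl ?abs_int_le1 // exprn_ge0 // ltW // abs_p_gt0.
Qed.

Lemma padic_approx (s t : nat) x : abs x <= (p%:R : R) ^+ s ->
  exists m : nat, (m < p ^ (t + s))%N /\ abs (x - m%:R / p%:R ^+ s) <= c ^+ t.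
Proof.
move=> x_le; have ps0 : (p%:R ^+ s : K) != 0 by rewrite expf_neq0 // pK_neq0.
have cXp : c ^+ s * (p%:R : R) ^+ s = 1.
  by rewrite -exprMn abs_p mulVf ?expr1n // gt_eqF // (natr_prime_gt0 Hp).
have /(Zp_approx (t + s))[m [mp xm]] : abs (p%:R ^+ s * x) <= 1.
  by rewrite (absM Habs) (absX Habs) -cXp ler_wpM2l // abs_pX_ge0.
exists m; split=> //.
have -> : x - m%:R / p%:R ^+ s = (p%:R ^+ s * x - m%:R) / p%:R ^+ s by field.
rewrite (absM Habs) (absV Habs) (absX Habs) ler_pdivrMr ?exprn_gt0 ?abs_p_gt0 //.
by rewrite -exprD.
Qed.

Lemma mx_net n (s t : nat) : exists N : seq 'M[K]_n,
  forall A : 'M[K]_n, (forall j k, abs (A j k) <= (p%:R : R) ^+ s) ->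
  exists2 B, B \in N & mx_ball abs B (c ^+ t) A.
Proof.
pose ctr (f : 'M['I_(p ^ (t + s))]_n) : 'M[K]_n :=
  \matrix_(j, k) ((f j k : nat)%:R / p%:R ^+ s).
exists [seq ctr f | f <- enum 'M['I_(p ^ (t + s))]_n] => A A_le.
have approx (jk : 'I_n * 'I_n) : exists m : 'I_(p ^ (t + s)),
    abs (A jk.1 jk.2 - (m : nat)%:R / p%:R ^+ s) <= c ^+ t.
  by have [m [mp Am]] := padic_approx t (A_le jk.1 jk.2); exists (Ordinal mp).
have [f Af] := boolp.choice approx.
exists (ctr (\matrix_(j, k) f (j, k))); first by apply: map_f; rewrite mem_enum.
by move=> j k; rewrite !mxE; apply: (Af (j, k)).
Qed.

Lemma mx_ball_chain n (a : nat -> 'M[K]_n) :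
  (forall k, mx_ball abs (a k) (c ^+ k) (a k.+1)) ->
  forall k m, (k <= m)%N -> mx_ball abs (a k) (c ^+ k) (a m).
Proof.
move=> a_step k; elim=> [|m ih]; first by rewrite leqn0 => /eqP->; apply/mx_ball_center/abs_pX_ge0.
rewrite leq_eqVlt => /orP[/eqP<-|km]; first by apply/mx_ball_center/abs_pX_ge0.
rewrite ltnS in km; exact: mx_ball_trans (abs_pX_le km) (ih km) (a_step m).
Qed.

Lemma mx_ball_chain_lim n (a : nat -> 'M[K]_n) :
  (forall k, mx_ball abs (a k) (c ^+ k) (a k.+1)) ->
  exists A, forall k, mx_ball abs (a k) (c ^+ k) A.
Proof.
move=> /mx_ball_chain a_chain.
have entry_lim (jk : 'I_n * 'I_n) : exists x : K, forall e, 0 < e ->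
    exists N, forall m, (N <= m)%N -> abs (a m jk.1 jk.2 - x) < e.
  case: jk => j k; case: HK => _ [_ [_ [_ [_ [_ complete]]]]].
  apply: (complete (fun m => a m j k)) => e e0; have [t te] := abs_pX_lt e0.
  exists t => m m' tm tm'; apply: le_lt_trans te.
  exact: (mx_ball_sym Habs (a_chain _ _ tm') (a_chain _ _ tm) j k).
have [lim a_lim] := boolp.choice entry_lim.
exists (\matrix_(j, k) lim (j, k)) => t j k; rewrite mxE.
apply: (abs_le_of_approx Habs (abs_pX_ge0 t)) => e e0.
have [N aN] := a_lim (j, k) e e0; exists (a (maxn N t) j k).
  by rewrite (absBC Habs); apply: aN; rewrite leq_maxl.
by apply: a_chain; rewrite leq_maxr.
Qed.

Section HeineBorel.
Variables (n : nat) (X C : set 'M[K]_n) (I : Type) (U : I -> set 'M[K]_n) (s : nat).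
Hypothesis CX : C `<=` X.
Hypothesis C_bounded : forall A, C A -> forall j k, abs (A j k) <= (p%:R : R) ^+ s.
Hypothesis C_closed : mx_closed abs C.
Hypothesis U_open : forall i, rel_open abs X (U i).
Hypothesis C_cover : C `<=` (fun A => exists i, U i A).

Let covered (D : set 'M[K]_n) :=
  exists idx : seq I, D `<=` (fun A => exists2 i, List.In i idx & U i A).

Lemma uncovered_subball t D : D `<=` C -> ~ covered D ->
  exists2 y, D y & ~ covered (C `&` mx_ball abs y (c ^+ t)).
Proof.
move=> DC Dunc; have [N N_net] := mx_net n s t.
have [B NB BD] : exists2 B, B \in N & ~ covered (D `&` mx_ball abs B (c ^+ t)).
  apply: boolp.contrapT => all_cov; apply: Dunc.
  have cov_B (B : 'M[K]_n) : exists idx : seq I, B \in N ->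
      D `&` mx_ball abs B (c ^+ t) `<=` (fun A => exists2 i, List.In i idx & U i A).
    case: (boolp.EM (B \in N)) => [NB|nNB]; last by exists [::] => /nNB.
    apply: boolp.contrapT => nocov; apply: all_cov; exists B => // -[idx cov].
    by apply: nocov; exists idx => _.
  have [idx is_cov] := boolp.choice cov_B.
  exists (List.flat_map idx N) => A DA.
  have [B NB BA] := N_net A (C_bounded (DC A DA)).
  have [i iB UiA] := is_cov B NB A (conj DA BA).
  by exists i => //; apply/List.in_flat_map; exists B; split => //; apply/seq_InP.
have [y [Dy By]] : exists y, (D `&` mx_ball abs B (c ^+ t)) y.
  apply: boolp.contrapT => empty; apply: BD; exists [::] => A DBA.
  by case: empty; exists A.
exists y => // -[idx cov]; apply: BD; exists idx => A [DA BA]; apply: cov; split.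
  exact: DC.
exact: (mx_ball_sym Habs By BA).
Qed.

Lemma uncovered_ball_chain : ~ covered C -> exists a : nat -> 'M[K]_n,
  forall k, ~ covered (C `&` mx_ball abs (a k) (c ^+ k)) /\
            (C `&` mx_ball abs (a k) (c ^+ k)) (a k.+1).
Proof.
move=> Cunc; have [a0 _ a0unc] := uncovered_subball 0 (@subset_refl _ C) Cunc.
apply: (@nat_dependent_choice _ (fun k y => ~ covered (C `&` mx_ball abs y (c ^+ k)))
  (fun k x y => (C `&` mx_ball abs x (c ^+ k)) y) a0 a0unc) => k A Aunc.
have [y [Cy Ay] yunc] := uncovered_subball k.+1 (@subIsetl _ C _) Aunc.
by exists y.
Qed.

(* A nested chain of uncovered balls converges to a point of [C] whose open
   neighbourhood [U i] would cover the small balls of the chain. *)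
Lemma bounded_closed_covered : covered C.
Proof.
apply: boolp.contrapT => /uncovered_ball_chain[a a_unc].
have [A aA] := mx_ball_chain_lim (fun k => proj2 (proj2 (a_unc k))).
have CA : C A.
  apply: C_closed => e e0; have [t te] := abs_pX_lt e0.
  have [_ [Cat1 at1]] := a_unc t.
  by exists (a t.+1) => //; apply: mx_ball_close te (mx_ball_sym Habs at1 (aA t)).
have [i UiA] := C_cover CA; have [e [e0 Ue]] := (U_open i).2 A UiA.
have [t te] := abs_pX_lt e0; case: (a_unc t) => unc _.
apply: unc; exists [:: i] => B [CB aB]; exists i; first by left.
by apply: Ue; [apply: CX|apply: mx_ball_close te (mx_ball_sym Habs (aA t) aB)].
Qed.

End HeineBorel.

Lemma mx_bounded_closed_compact n (X C : set 'M[K]_n) : C `<=` X ->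
  (exists M, forall A, C A -> forall j k, abs (A j k) <= M) -> mx_closed abs C ->
  rel_compact abs X C.
Proof.
move=> CX [M C_le] C_closed; split=> // I U U_open C_cover.
have [s Ms] := exists_natrX_ge M.
apply: (bounded_closed_covered CX _ C_closed U_open C_cover) => A CA j k.
exact: le_trans (C_le A CA j k) Ms.
Qed.

Section WeightedCompactOpen.
Variables (n : nat) (w : nat -> R).
Hypothesis w_gt0 : forall d, 0 < w d.
Hypothesis wM : forall a b, (1 <= a)%N -> (1 <= b)%N -> (a + b <= n - 1)%N ->
  w a * w b <= w (a + b)%N.

Lemma wring_compact_open_subring : compact_open_subring abs (wring abs n w).
Proof.
split; [split|split].
- by move=> A [].
- exact: wring0.
- by move=> A B; apply: wringB.
- by move=> A B; apply: wringM.
- by apply: mx_bounded_closed_compact; [move=> A []|apply: wring_bounded|apply: wring_closed].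
- exact: wring_open.
Qed.

Lemma wgroup_compact_open_subgroup : (0 < n)%N -> compact_open_subgroup abs (wgroup abs n w).
Proof.
move=> n0; split; [split|split].
- by move=> A [].
- exact: wgroup1.
- by move=> A B; apply: wgroupM.
- by move=> A; apply: wgroupV.
- by apply: mx_bounded_closed_compact; [move=> A []|apply: wgroup_bounded|apply: wgroup_closed].
- exact: wgroup_open.
Qed.

End WeightedCompactOpen.

End Padic.

Section PadicUnitriangular.
Variables (R : realType) (K : fieldType) (abs : K -> R) (p : nat).
Hypothesis Hp : prime p.
Hypothesis HK : is_Qp p abs.
Let Habs := is_Qp_nonarchimedean HK.
Local Notation c := (abs (p%:R : K)).

Lemma abs_pXz (z : int) : c ^ z = (p%:R : R) ^ (- z).
Proof. by rewrite (abs_p Hp HK) exprz_inv. Qed.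

Lemma abs_pXz_gt0 (z : int) : 0 < c ^ z.
Proof. by rewrite exprz_gt0 // (abs_p_gt0 Hp HK). Qed.

Lemma pZpE (z : int) x : pZp abs p z x <-> abs x <= c ^ z.
Proof.
split=> [[y [y_le1 ->]]|x_le].
  by rewrite (absM Habs) (absXz Habs) ler_piMr // ltW // abs_pXz_gt0.
have pz0 : (p%:R : K) ^ z != 0 by rewrite expfz_neq0 // (pK_neq0 Hp HK).
exists ((p%:R ^ z)^-1 * x); split; last by rewrite mulrA mulfV ?mul1r.
rewrite /Defs.Zp /= (absM Habs) (absV Habs) (absXz Habs).
by rewrite ler_pdivrMl ?abs_pXz_gt0 // mulr1.
Qed.

Lemma ring_l_wring n (l : nat -> int) : ring_l abs p n l = wring abs n (fun d => c ^ l d).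
Proof. by apply/seteqP; split=> B [B0 Bl]; split=> // j k jk; apply/pZpE/Bl. Qed.

Lemma group_l_wgroup n (l : nat -> int) : group_l abs p n l = wgroup abs n (fun d => c ^ l d).
Proof. by apply/seteqP; split=> A [A1 Al]; split=> // j k jk; apply/pZpE/Al. Qed.

Lemma abs_pXz_subadditive_weight n (l : nat -> int) :
  (forall a b, (1 <= a)%N -> (1 <= b)%N -> (a + b <= n - 1)%N -> l (a + b)%N <= l a + l b) ->
  forall a b, (1 <= a)%N -> (1 <= b)%N -> (a + b <= n - 1)%N ->
  c ^ l a * c ^ l b <= c ^ l (a + b)%N.
Proof.
move=> l_sub a b a1 b1 abn.
rewrite -exprzDr ?unitfE ?gt_eqF ?(abs_p_gt0 Hp HK) // !abs_pXz.
by rewrite ler_eXz2l ?lerN2 ?l_sub // (natr_prime_gt1 Hp).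
Qed.

Lemma max_root_norm_le n (A : 'M[K]_n) (b : R) : 0 <= b ->
  max_root_norm abs A <= b <-> forall j k : 'I_n, (j < k)%N -> abs (A j k) <= b ^+ (k - j).
Proof.
move=> b0; rewrite /max_root_norm.
split=> [/bigmax_leP[_ Ab] j k jk|Ab].
  have /bigmax_leP[_ /(_ k jk)] := Ab j isT.
  by rewrite powR_invn_le ?(abs_ge0 Habs) ?subn_gt0.
apply/bigmax_leP; split=> // j _; apply/bigmax_leP; split=> // k jk.
by rewrite powR_invn_le ?(abs_ge0 Habs) ?subn_gt0 ?Ab.
Qed.

Lemma max_root_norm_wgroup n (m : int) :
  [set A | T_plus K n A /\ max_root_norm abs A <= (p%:R : R) ^ (- m)] =
  wgroup abs n (fun d => ((p%:R : R) ^ (- m)) ^+ d).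
Proof.
have pm0 : 0 <= (p%:R : R) ^ (- m) by rewrite exprz_ge0.
by apply/seteqP; split=> A [A1 Am]; split=> //; apply/max_root_norm_le.
Qed.

Lemma wgroup_delta n (m : int) :
  wgroup abs n (fun d => ((p%:R : R) ^ (- m)) ^+ d) =
  delta ((p%:R : K) ^ m) @` T_plus_Zp abs n.
Proof.
set r := (p%:R : K) ^ m.
have r0 : r != 0 by rewrite expfz_neq0 // (pK_neq0 Hp HK).
have abs_r : abs r = (p%:R : R) ^ (- m) by rewrite (absXz Habs) abs_pXz.
have pm_gt0 : 0 < (p%:R : R) ^ (- m) by rewrite exprz_gt0 // (natr_prime_gt0 Hp).
apply/seteqP; split=> [A [[A1 A0] Ar]|_ [B [[B1 B0] B_le1] <-]].
  exists (delta r^-1 A).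
    split; first split.
    - by move=> j; rewrite mxE ltnn A1.
    - by move=> j k kj; rewrite mxE ltnNge (ltnW kj) /= A0.
    - move=> j k; rewrite /Defs.Zp /= mxE; case: (ltngtP j k) => [jk|kj|/val_inj ->].
      + rewrite (absM Habs) (absX Habs) (absV Habs) abs_r exprVn mulrC.
        by rewrite ler_pdivrMr ?exprn_gt0 // mul1r Ar.
      + by rewrite A0 // (abs0 Habs) ler01.
      + by rewrite A1 (abs1 Habs).
  apply/matrixP => j k; rewrite !mxE; case: ifP => jk; rewrite jk //.
  by rewrite mulrA -exprMn mulfV // expr1n mul1r.
split; first split.
- by move=> j; rewrite mxE ltnn B1.
- by move=> j k kj; rewrite mxE ltnNge (ltnW kj) /= B0.
- move=> j k jk; rewrite mxE jk (absM Habs) (absX Habs) abs_r.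
  by rewrite ler_piMr ?exprn_ge0 ?(ltW pm_gt0) ?B_le1.
Qed.

Lemma large_compact_open_subgroups n : (0 < n)%N -> has_large_compact_open_subgroups abs n.
Proof.
move=> n0 C [CT C_compact].
pose G (s : nat) := wgroup abs n (fun d => (p%:R : R) ^+ (s * d)).
have G_cos s : compact_open_subgroup abs (G s).
  apply: (wgroup_compact_open_subgroup Hp HK) n0 => [d|a b _ _ _]; last by rewrite -exprD mulnDr.
  by rewrite exprn_gt0 // (natr_prime_gt0 Hp).
have G_mono s s' A : (s <= s')%N -> G s A -> G s' A.
  move=> ss' [AT As]; split=> // j k jk; apply: le_trans (As j k jk) _.
  by rewrite ler_eXn2l ?(natr_prime_gt1 Hp) // leq_mul2r ss' orbT.
have [|idx C_idx] := C_compact nat G (fun s => (G_cos s).2.2).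
  move=> A CA; have [M A_le] : exists M, forall j k, abs (A j k) <= M.
    exists (\big[Num.max/0]_(jk : 'I_n * 'I_n) abs (A jk.1 jk.2)) => j k.
    exact: (le_bigmax _ _ (j, k)).
  have [s Ms] := exists_natrX_ge Hp M.
  exists s; split; first exact: CT.
  move=> j k jk; apply: le_trans (A_le j k) (le_trans Ms _).
  by rewrite ler_eXn2l ?(natr_prime_gt1 Hp) // leq_pmulr // subn_gt0.
exists (G (\max_(s <- idx) s)); split=> // A CA.
have [s /seq_InP s_idx GsA] := C_idx A CA.
by apply: G_mono GsA; apply: (@leq_bigmax_seq _ idx xpredT id s s_idx).
Qed.

End PadicUnitriangular.

Theorem mainTheorem7 (p : nat) (n : nat) (R : realType) (K : fieldType) (abs : K -> R)
  (Hp : prime p) (Hn : (2 <= n)%N) (HK : is_Qp p abs) (l : nat -> int)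
  (Hl : forall a b : nat, (1 <= a)%N -> (1 <= b)%N -> (a + b <= n - 1)%N ->
          l (a + b)%N <= l a + l b) :
  [/\ compact_open_subring abs (ring_l abs p n l),
      compact_open_subgroup abs (group_l abs p n l),
      (forall m : int,
         [set A | T_plus K n A /\ max_root_norm abs A <= (p%:R : R) ^ (- m)]
           = delta ((p%:R : K) ^ m) @` T_plus_Zp abs n
         /\ compact_open_subgroup abs
              [set A | T_plus K n A /\ max_root_norm abs A <= (p%:R : R) ^ (- m)])
    & has_large_compact_open_subgroups abs n].
Proof.
have n0 : (0 < n)%N by apply: leq_trans Hn.
have l_gt0 d : 0 < abs (p%:R : K) ^ l d by apply: abs_pXz_gt0.
have l_mul := abs_pXz_subadditive_weight Hp HK Hl.
split.
- by rewrite (ring_l_wring Hp HK); apply: (wring_compact_open_subring Hp HK).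
- by rewrite (group_l_wgroup Hp HK); apply: (wgroup_compact_open_subgroup Hp HK).
- move=> m; rewrite (max_root_norm_wgroup HK) (wgroup_delta Hp HK); split=> //.
  rewrite -(wgroup_delta Hp HK); apply: (wgroup_compact_open_subgroup Hp HK) => // [d|a b _ _ _].
    by rewrite exprn_gt0 // exprz_gt0 // (natr_prime_gt0 Hp).
  by rewrite -exprD.
- exact: (large_compact_open_subgroups Hp HK).
Qed.
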